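(* Let $n\ge 6$ be divisible by $6$. The map $\varphi_{1,n}:\mathcal{P}_{1,n}\to W_n$ is a bijection, and for all $(x,k),(y,l)\in\mathcal{P}_{1,n}$, $$\rho_n((x,k),(y,l))\le 2+2\,d_\infty(\varphi_{1,n}(x,k),\varphi_{1,n}(y,l))$$ and $$d_\infty(\varphi_{1,n}(x,k),\varphi_{1,n}(y,l))\le 6\,\rho_n((x,k),(y,l))+12 .$$ Consequently, for all such pairs, $\tfrac14\rho_n\le d_\infty\circ(\varphi_{1,n}\times\varphi_{1,n})\le 18\,\rho_n$.
   Context: $\mathcal{G}_n=\mathbb{Z}_2\wr\mathbb{Z}_n$ is the set of pairs $(x,k)$ with $x\subseteq\mathbb{Z}_n$, $k\in\mathbb{Z}_n$; $\rho_n$ is the shortest-path metric of the graph on $\mathcal{G}_n$ in which $(x,k)$ is adjacent to $(x,k+1)$ and to $(x\triangle\{k+1\},k+1)$ (edges undirected; this is the Cayley graph with generators $t=(\emptyset,1)$, $ta=(\{1\},1)$). Identify $\mathbb{Z}_n$ with $\{0,1,\dots,n-1\}$. Let $P_1=\{n/6,n/6+1,\dots,5n/6\}\subseteq\mathbb{Z}_n$ and $\mathcal{P}_{1,n}=\{(x,k)\in\mathcal{G}_n: k\in P_1\}$ with the metric $\rho_n$ restricted. $T_n$ is the binary tree of depth $n$: its vertices are the $0/1$ sequences of length $\le n$ (including the empty one), with $A$ adjacent to $A$ extended by one symbol, and $d_T$ its graph metric; $|A|$ is the length of $A$. On $T_n\times T_n$ let $d_\infty((A_1,A_2),(B_1,B_2))=\max\{d_T(A_1,B_1),d_T(A_2,B_2)\}$,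 and $W_n=\{(A_1,A_2)\in T_n\times T_n: |A_1|+|A_2|=n,\ |A_1|,|A_2|\in[n/6,5n/6]\}$. Define $\varphi_{1,n}(x,k)=(A_1,A_2)$ where $A_1=(a_{1,0},\dots,a_{1,k-1})$ has length $k$ with $a_{1,j}=1$ iff $j\in x$, and $A_2=(a_{2,1},\dots,a_{2,n-k})$ has length $n-k$ with $a_{2,i}=1$ iff $n-i\in x$. *)

From mathcomp Require Import all_boot.
Set Implicit Arguments. Unset Strict Implicit. Unset Printing Implicit Defensive.

Fixpoint walk (T : finType) (e : rel T) (m : nat) (x y : T) : bool :=
  match m with
  | 0 => x == y
  | m'.+1 => [exists z, e x z && walk e m' z y]
  end.

(* shortest-path distance: the least m with a walk of length m from x to y.
   (Convention: #|T| if y is unreachable from x; never used here since the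
   graphs considered are connected, so every distance is < #|T|.) *)
Definition gdist (T : finType) (e : rel T) (x y : T) : nat :=
  find (fun m => walk e m x y) (iota 0 #|T|).

Definition Gn (n : nat) : finType := ({set 'I_n} * 'I_n)%type.

Definition symdiff (n : nat) (A B : {set 'I_n}) : {set 'I_n} :=
  (A :|: B) :\: (A :&: B).

Definition gstep (n : nat) (p q : Gn n) : bool :=
  (q.2 == ordS p.2) && ((q.1 == p.1) || (q.1 == symdiff p.1 [set q.2])).

Definition gadj (n : nat) : rel (Gn n) := fun p q => gstep p q || gstep q p.

Definition rho (n : nat) (p q : Gn n) : nat := gdist (@gadj n) p q.

Definition inP1 (n : nat) (k : nat) : bool := (n %/ 6 <= k) && (k <= 5 * (n %/ 6)).
Definition P1n (n : nat) (p : Gn n) : bool := inP1 n p.2.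

(* vertices: 0/1 sequences of length <= n, as a dependent pair (length, tuple) *)
Definition Tn (n : nat) : finType := {k : 'I_n.+1 & k.-tuple bool}.

Definition tseq (n : nat) (A : Tn n) : seq bool := val (tagged A).

Definition tlen (n : nat) (A : Tn n) : nat := size (tseq A).

Definition tadj (n : nat) : rel (Tn n) := fun A B =>
  [exists b : bool, tseq B == rcons (tseq A) b] ||
  [exists b : bool, tseq A == rcons (tseq B) b].

Definition dT (n : nat) (A B : Tn n) : nat := gdist (@tadj n) A B.

Definition dinf (n : nat) (P Q : Tn n * Tn n) : nat :=
  maxn (dT P.1 Q.1) (dT P.2 Q.2).

Definition Wn (n : nat) (P : Tn n * Tn n) : bool :=
  [&& tlen P.1 + tlen P.2 == n, inP1 n (tlen P.1) & inP1 n (tlen P.2)].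

(* build a tree vertex from a sequence (meant for sequences of size <= n) *)
Definition mkT (n : nat) (s : seq bool) : Tn n :=
  @Tagged _ (@inord n (size s)) (fun k : 'I_n.+1 => k.-tuple bool)
     [tuple nth false s i | i < @inord n (size s)].

Definition memZ (n : nat) (x : {set 'I_n}) (j : nat) : bool :=
  [exists i : 'I_n, (val i == j) && (i \in x)].

Definition phi1 (n : nat) (p : Gn n) : Tn n * Tn n :=
  (mkT n [seq memZ p.1 j | j <- iota 0 p.2],
   mkT n [seq memZ p.1 (n - i) | i <- iota 1 (n - p.2)]).

From mathcomp Require Import all_boot zmodp zify.
Set Implicit Arguments. Unset Strict Implicit. Unset Printing Implicit Defensive.

(* phi_{1,n}(x,k) records in A1 the lamps left of the cursor and in A2 the
   lamps right of it, read backwards from n-1; the tree distance of two 0/1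
   words is |s| + |t| - 2 lcp(s,t).  Upper bound: the lamps covered by the
   common prefixes of the A1's and of the A2's already agree, so a walk going
   once around the cycle through the remaining positions, fixing lamps on its
   way, has length at most 2 + d(A1) + d(A2).  Lower bound: a step that does
   not cross the seam between n-1 and 0 moves each tree coordinate by at most
   3, while a walk between two points of P_1 that crosses the seam has length
   at least n/3 - 2. *)

Section Walks.
Variables (T : finType) (e : rel T).

Lemma walkP m x y :
  reflect (exists p, [/\ size p = m, path e x p & last x p = y]) (walk e m x y).
Proof.
elim: m x => [|m IH] x /=.
  apply: (iffP eqP) => [->|[[|z p] [//= _ _ ->]]]; first by exists [::].
apply: (iffP existsP) => [[z /andP[exz /IH[p [sp pp lp]]]]|].
  by exists (z :: p); rewrite /= exz sp.
move=> [[|z p] [//= [sp] /andP[exz pp] lp]].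
by exists z; rewrite exz; apply/IH; exists p.
Qed.

Lemma walk_shorten m x y : walk e m x y ->
  exists2 m', m' <= m & (m' < #|T|) && walk e m' x y.
Proof.
move=> /walkP[p [<- pp <-]].
case: (shortenP pp) => p' pp' up' sub_p'p.
exists (size p'); first by apply: uniq_leq_size => //; case/andP: up'.
apply/andP; split; last by apply/walkP; exists p'.
by have := max_card (mem (x :: p')); move/card_uniqP: up' => ->.
Qed.

Lemma gdist_le m x y : walk e m x y -> gdist e x y <= m.
Proof.
case/walk_shorten => m' le_m'm /andP[lt_m'T w]; apply: leq_trans le_m'm.
rewrite leqNgt; apply/negP => lt_m'.
by have := before_find 0 lt_m'; rewrite nth_iota ?add0n // w.
Qed.

Lemma walk_gdist m x y : walk e m x y -> walk e (gdist e x y) x y.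
Proof.
case/walk_shorten => m' _ /andP[lt_m' w].
have has_walk : has (fun m => walk e m x y) (iota 0 #|T|).
  by apply/hasP; exists m' => //; rewrite mem_iota.
have := nth_find 0 has_walk; rewrite nth_iota ?add0n //.
by rewrite -[X in _ < X](size_iota 0) -has_find.
Qed.

Lemma walk_cat m1 m2 x y z :
  walk e m1 x y -> walk e m2 y z -> walk e (m1 + m2) x z.
Proof.
elim: m1 x => [|m IH] x /=; first by move/eqP->.
case/existsP=> w /andP[exw wm] wz; apply/existsP; exists w.
by rewrite exw IH.
Qed.

Lemma walk_lipschitz (f : T -> nat) : (forall a b, e a b -> f a <= f b + 1) ->
  forall m x y, walk e m x y -> f x <= f y + m.
Proof.
move=> f_lip; elim=> [|m IH] x y /=; first by move/eqP->; rewrite addn0.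
case/existsP=> w /andP[exw wm].
have := f_lip _ _ exw; have := IH _ _ wm; lia.
Qed.

Hypothesis e_sym : symmetric e.

Lemma walk_sym m x y : walk e m x y -> walk e m y x.
Proof.
elim: m x y => [|m IH] x y; first by rewrite /= eq_sym.
case/existsP=> w /andP[exw wm].
rewrite -addn1; apply: walk_cat (IH _ _ wm) _.
by apply/existsP; exists x; rewrite e_sym exw /=.
Qed.

End Walks.

Fixpoint lcp (s t : seq bool) : nat :=
  match s, t with
  | a :: s', b :: t' => if a == b then (lcp s' t').+1 else 0
  | _, _ => 0
  end.

Definition tdist (s t : seq bool) := size s + size t - 2 * lcp s t.

Lemma lcp_size s t : lcp s t <= minn (size s) (size t).
Proof.
elim: s t => [|a s IH] [|b t] //=; case: eqP => // _; have := IH t; lia.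
Qed.

Lemma lcp_sym s t : lcp s t = lcp t s.
Proof. by elim: s t => [|a s IH] [|b t] //=; rewrite eq_sym IH. Qed.

Lemma lcp_refl s : lcp s s = size s.
Proof. by elim: s => //= a s ->; rewrite eqxx. Qed.

Lemma nth_lcp s t j : j < lcp s t -> nth false s j = nth false t j.
Proof.
elim: s t j => [|a s IH] [|b t] j //=; case: eqP => // ->.
by case: j => //= j; rewrite ltnS; apply: IH.
Qed.

Lemma lcp_ge s t m : m <= size s -> m <= size t ->
  (forall j, j < m -> nth false s j = nth false t j) -> m <= lcp s t.
Proof.
elim: s t m => [|a s IH] [|b t] [|m] //=; rewrite !ltnS => hs ht st_eq.
have /= -> := st_eq 0 erefl; rewrite eqxx ltnS; apply: IH => // j hj; exact: (st_eq j.+1).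
Qed.

Lemma lcp_min s t u : minn (lcp s t) (lcp t u) <= lcp s u.
Proof.
elim: s t u => [|a s IH] [|b t] [|c u] //=; rewrite ?minn0 ?min0n //.
case: (a =P b) => [<-|]; last by rewrite min0n.
case: (a =P c) => _; last by rewrite minn0.
by rewrite minnSS ltnS.
Qed.

Lemma lcp_rcons s t b : lcp s t <= lcp (rcons s b) t <= (lcp s t).+1.
Proof.
elim: s t => [|a s IH] [|c t] //=; first by case: (b == c).
by case: (a == c) => //=; rewrite !ltnS.
Qed.

Lemma tdist_refl s : tdist s s = 0.
Proof. by rewrite /tdist lcp_refl; lia. Qed.

Lemma tdist_sym s t : tdist s t = tdist t s.
Proof. by rewrite /tdist lcp_sym addnC. Qed.

Lemma tdist_triangle s t u : tdist s u <= tdist s t + tdist t u.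
Proof.
rewrite /tdist; have := lcp_min s t u; have := lcp_size s t.
have := lcp_size t u; have := lcp_size s u; lia.
Qed.

Lemma tdist_rcons s t b :
  tdist (rcons s b) t <= tdist s t + 1 /\ tdist s t <= tdist (rcons s b) t + 1.
Proof.
rewrite /tdist size_rcons; have := lcp_rcons s t b; have := lcp_size s t.
have := lcp_size (rcons s b) t; rewrite size_rcons; lia.
Qed.

Lemma tdist_eq0 s t : tdist s t = 0 -> s = t.
Proof.
rewrite /tdist => st0; have := lcp_size s t => hs.
apply: (@eq_from_nth _ false); first lia.
move=> j hj; apply: nth_lcp; lia.
Qed.

Section Tree.
Variable n : nat.

Lemma tseq_inj : injective (@tseq n).
Proof.
case=> k t [k' t'] /= E.
have ek : k = k'.
  apply/val_inj; rewrite /= -(size_tuple t) -(size_tuple t').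
  by move: E; rewrite /tseq /= => ->.
by subst k'; congr Tagged; exact: val_inj.
Qed.

Lemma tlen_le (A : Tn n) : tlen A <= n.
Proof. by case: A => k t; rewrite /tlen /tseq /= size_tuple -ltnS ltn_ord. Qed.

Lemma tseq_mkT s : size s <= n -> tseq (mkT n s) = s.
Proof.
move=> hs; rewrite /tseq /mkT /= /mktuple /= /ord_tuple /=.
by rewrite -[in RHS](mkseq_nth false s) /mkseq -val_enum_ord -map_comp inordK.
Qed.

Lemma mkT_tseq (A : Tn n) : mkT n (tseq A) = A.
Proof. by apply: tseq_inj; rewrite tseq_mkT // tlen_le. Qed.

Lemma tadj_sym : symmetric (@tadj n).
Proof. by move=> A B; rewrite /tadj orbC. Qed.

Lemma walk_mkT_cat s u :
  size (s ++ u) <= n -> walk (@tadj n) (size u) (mkT n s) (mkT n (s ++ u)).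
Proof.
elim: u s => [|b u IH] s /=; first by rewrite cats0.
rewrite size_cat /= => hs; apply/existsP; exists (mkT n (rcons s b)).
apply/andP; split.
  apply/orP; left; apply/existsP; exists b.
  by rewrite !tseq_mkT ?size_rcons //; lia.
by rewrite -cat_rcons; apply: IH; rewrite size_cat size_rcons; lia.
Qed.

Lemma walk_tdist (A B : Tn n) : walk (@tadj n) (tdist (tseq A) (tseq B)) A B.
Proof.
set s := tseq A; set t := tseq B; set c := lcp s t.
have hcs : c <= minn (size s) (size t) := lcp_size s t.
have ts : take c t = take c s.
  apply: (@eq_from_nth _ false); rewrite !size_takel; try lia.
  by move=> j hj; rewrite !nth_take //; apply/esym/nth_lcp.
have up (u : seq bool) (C : Tn n) : tseq C = u -> c <= size u ->
    walk (@tadj n) (size u - c) (mkT n (take c u)) C.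
  move=> Cu hcu; rewrite -(mkT_tseq C) Cu -{3}(cat_take_drop c u) -size_drop.
  by apply: walk_mkT_cat; rewrite cat_take_drop -Cu tlen_le.
have wA : walk (@tadj n) (size s - c) (mkT n (take c s)) A by apply: up => //; lia.
have wB : walk (@tadj n) (size t - c) (mkT n (take c s)) B.
  by rewrite -ts; apply: up => //; lia.
have -> : tdist s t = size s - c + (size t - c) by rewrite /tdist; lia.
exact: walk_cat (walk_sym tadj_sym wA) wB.
Qed.

Lemma dT_tdist (A B : Tn n) : dT A B = tdist (tseq A) (tseq B).
Proof.
apply/eqP; rewrite eqn_leq gdist_le ?walk_tdist //=.
have tadj_lip (X Y : Tn n) :
    tadj X Y -> tdist (tseq X) (tseq B) <= tdist (tseq Y) (tseq B) + 1.
  case/orP => /existsP[b /eqP ->].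
  - by case: (tdist_rcons (tseq X) (tseq B) b).
  - by case: (tdist_rcons (tseq Y) (tseq B) b).
have := walk_lipschitz tadj_lip (walk_gdist (walk_tdist A B)).
by rewrite tdist_refl.
Qed.

End Tree.

Section Lamplighter.
Variable m : nat.
Local Notation N := m.+1.

Lemma inZpDl a : inZp (N + a) = inZp a :> 'I_N.
Proof. by apply: val_inj; rewrite /= modnDl. Qed.

Lemma gadj_sym : symmetric (@gadj N).
Proof. by move=> p q; rewrite /gadj orbC. Qed.

Definition set_lamp (x : {set 'I_N}) (i : 'I_N) (b : bool) :=
  if (i \in x) == b then x else symdiff x [set i].

Lemma in_symdiff1 (x : {set 'I_N}) c i :
  (i \in symdiff x [set c]) = if i == c then ~~ (i \in x) else i \in x.
Proof. by rewrite /symdiff !inE; case: (i =P c) => _; case: (i \in x). Qed.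

Lemma in_set_lamp x i b j : (j \in set_lamp x i b) = if j == i then b else j \in x.
Proof.
rewrite /set_lamp; case: eqP => xb; rewrite ?in_symdiff1; case: (j =P i) => // ->.
  by rewrite xb.
by case: (i \in x) xb; case: b.
Qed.

Lemma walk_sweep j e (x z : {set 'I_N}) :
  (forall i : 'I_N, (forall t, t < j -> val i != (e + 1 + t) %% N) ->
     (i \in z) = (i \in x)) ->
  walk (@gadj N) j ((x, inZp e) : Gn N) ((z, inZp (e + j)) : Gn N).
Proof.
elim: j e x => [|j IH] e x zx /=.
  by rewrite addn0 xpair_eqE eqxx andbT; apply/eqP/setP => i; rewrite zx.
pose i1 : 'I_N := inZp e.+1.
apply/existsP; exists ((set_lamp x i1 (i1 \in z), i1) : Gn N); apply/andP; split.
  apply/orP; left; apply/andP; split.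
    by apply/eqP/val_inj; rewrite /= -[(e %% N).+1]addn1 modnDml addn1.
  by rewrite /set_lamp; case: ifP => _; rewrite eqxx ?orbT.
rewrite -addSnnS; apply: IH => i zx'; rewrite in_set_lamp.
case: (i =P i1) => [->//|ne]; apply: zx => -[|t] ht.
  by apply/negP => /eqP E; apply: ne; apply: val_inj; rewrite /= E addn0 addn1.
by have := zx' t ht; rewrite (_ : e.+1 + 1 + t = e + 1 + t.+1) //; lia.
Qed.

(* The first route moves the cursor left from k to c1 - 1, sweeps right
   through c1, ..., N - c2 fixing every lamp, and moves left to l; the second
   is its mirror image. *)
Lemma walk_routes (x y : {set 'I_N}) (k l : 'I_N) c1 c2 :
  c1 <= k -> c1 <= l -> k + c2 <= N -> l + c2 <= N ->
  (forall i : 'I_N, (i < c1) || (N - c2 <= i) -> (i \in x) = (i \in y)) ->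
  walk (@gadj N) ((k - c1 + 1) + (N - c2 - c1 + 1) + (N - c2 - l))
    ((x, k) : Gn N) (y, l) /\
  walk (@gadj N) ((N - c2 - k) + (N - c2 - c1 + 1) + (l - c1 + 1))
    ((x, k) : Gn N) (y, l).
Proof.
move=> c1k c1l kc2 lc2 xy.
set b := N - c2; set e0 := c1 + m.
have sweep (z1 z2 : {set 'I_N}) :
    (forall i : 'I_N, (i < c1) || (N - c2 <= i) -> (i \in z1) = (i \in z2)) ->
    walk (@gadj N) (b - c1 + 1) ((z1, inZp e0) : Gn N) ((z2, inZp (N + b)) : Gn N).
  move=> z12; have -> : N + b = e0 + (b - c1 + 1) by rewrite /e0 /b; lia.
  apply: walk_sweep => i i_out; apply/esym/z12.
  case: (ltnP i c1) => //= ic1; rewrite leqNgt; apply/negP => ib.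
  have lt_ib : i - c1 < b - c1 + 1 by rewrite /b; lia.
  have := i_out _ lt_ib; rewrite /e0 (_ : c1 + m + 1 + _ = N + i); last lia.
  by rewrite modnDl modn_small // eqxx.
have move_right z (a j : nat) :
    walk (@gadj N) j ((z, inZp a) : Gn N) ((z, inZp (a + j)) : Gn N).
  exact: walk_sweep.
split.
- have w1 : walk (@gadj N) (k - c1 + 1) ((x, k) : Gn N) ((x, inZp e0) : Gn N).
    apply: (walk_sym gadj_sym); have := move_right x e0 (k - c1 + 1).
    by rewrite (_ : e0 + _ = N + k) ?inZpDl ?valZpK // /e0; lia.
  have w3 : walk (@gadj N) (b - l) ((y, inZp (N + b)) : Gn N) ((y, l) : Gn N).
    apply: (walk_sym gadj_sym); have := move_right y (N + l) (b - l).
    by rewrite (_ : N + l + _ = N + b) ?inZpDl ?valZpK // /b; lia.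
  exact: walk_cat (walk_cat w1 (sweep x y xy)) w3.
- have w1 : walk (@gadj N) (b - k) ((x, k) : Gn N) ((x, inZp (N + b)) : Gn N).
    have := move_right x k (b - k).
    by rewrite (_ : k + _ = b) ?inZpDl ?valZpK // /b; lia.
  have w3 : walk (@gadj N) (l - c1 + 1) ((y, inZp e0) : Gn N) ((y, l) : Gn N).
    have := move_right y e0 (l - c1 + 1).
    by rewrite (_ : e0 + _ = N + l) ?inZpDl ?valZpK // /e0; lia.
  have w2 := walk_sym gadj_sym (sweep y x (fun i hi => esym (xy i hi))).
  exact: walk_cat (walk_cat w1 w2) w3.
Qed.

Lemma walk_rho (p q : Gn N) : walk (@gadj N) (rho p q) p q.
Proof.
case: p q => x k [y l].
have kN : k + 0 <= N by rewrite addn0 ltnW.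
have lN : l + 0 <= N by rewrite addn0 ltnW.
have xy (i : 'I_N) : (i < 0) || (N - 0 <= i) -> (i \in x) = (i \in y).
  by rewrite ltn0 subn0 leqNgt ltn_ord.
have [w _] := walk_routes (leq0n k) (leq0n l) kN lN xy.
exact: walk_gdist w.
Qed.

Lemma rho_eq0 (p q : Gn N) : (rho p q == 0) = (p == q).
Proof.
apply/eqP/eqP => [r0|<-]; first by have := walk_rho p q; rewrite r0 => /eqP.
by apply/eqP; rewrite -leqn0; exact: (@gdist_le _ _ 0 p p (eqxx p)).
Qed.

Definition A1 (p : Gn N) := [seq memZ p.1 j | j <- iota 0 p.2].
Definition A2 (p : Gn N) := [seq memZ p.1 (N - i) | i <- iota 1 (N - p.2)].

Lemma size_A1 (p : Gn N) : size (A1 p) = p.2.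
Proof. by rewrite size_map size_iota. Qed.

Lemma size_A2 (p : Gn N) : size (A2 p) = N - p.2.
Proof. by rewrite size_map size_iota. Qed.

Lemma tseq_phi1 (p : Gn N) : tseq (phi1 p).1 = A1 p /\ tseq (phi1 p).2 = A2 p.
Proof.
by split; rewrite tseq_mkT // ?size_map size_iota ?leq_subr // ltnW.
Qed.

Lemma memZ_val (x : {set 'I_N}) (i : 'I_N) : memZ x i = (i \in x).
Proof.
apply/existsP/idP => [[i' /andP[/eqP i'i]]|xi]; last by exists i; rewrite eqxx.
by rewrite (val_inj i'i).
Qed.

Lemma memZ_inZp (x : {set 'I_N}) j : j < N -> memZ x j = (inZp j \in x).
Proof. by move=> jN; rewrite -memZ_val /= modn_small. Qed.

Lemma nth_A1 (p : Gn N) j : j < p.2 -> nth false (A1 p) j = memZ p.1 j.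
Proof. by move=> hj; rewrite (nth_map 0) ?size_iota // nth_iota. Qed.

Lemma nth_A2 (p : Gn N) j :
  j < N - p.2 -> nth false (A2 p) j = memZ p.1 (N - j.+1).
Proof. by move=> hj; rewrite (nth_map 0) ?size_iota // nth_iota // add1n. Qed.

Lemma A1_A2_inj (p q : Gn N) : A1 p = A1 q -> A2 p = A2 q -> p = q.
Proof.
case: p q => [x k] [y l] E1 E2.
have ekl : k = l by apply: val_inj; have := congr1 size E1; rewrite !size_A1.
subst l; congr pair; apply/setP => i.
case: (ltnP i k) => ik.
  by have := congr1 (nth false ^~ i) E1; rewrite !nth_A1 //= !memZ_val.
have ik' : N - i.+1 < N - k by have := ltn_ord i; lia.
have := congr1 (nth false ^~ (N - i.+1)) E2; rewrite !nth_A2 //=.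
by rewrite (_ : N - _.+1 = i) ?memZ_val //; have := ltn_ord i; lia.
Qed.

Lemma phi1_inj : injective (@phi1 N).
Proof.
move=> p q pq; have [p1 p2] := tseq_phi1 p; have [q1 q2] := tseq_phi1 q.
by apply: A1_A2_inj; [rewrite -p1 -q1 | rewrite -p2 -q2]; rewrite pq.
Qed.

Lemma dinf_phi1 (p q : Gn N) :
  dinf (phi1 p) (phi1 q) = maxn (tdist (A1 p) (A1 q)) (tdist (A2 p) (A2 q)).
Proof.
rewrite /dinf !dT_tdist.
by have [-> ->] := tseq_phi1 p; have [-> ->] := tseq_phi1 q.
Qed.

Lemma dinf_phi1_eq0 (p q : Gn N) : (dinf (phi1 p) (phi1 q) == 0) = (p == q).
Proof.
apply/eqP/eqP => [|<-]; last by rewrite dinf_phi1 !tdist_refl.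
rewrite dinf_phi1 => d0; apply: A1_A2_inj; apply: tdist_eq0; lia.
Qed.

Lemma lamps_eq_lcp (p q : Gn N) (i : 'I_N) :
  (i < lcp (A1 p) (A1 q)) || (N - lcp (A2 p) (A2 q) <= i) ->
  (i \in p.1) = (i \in q.1).
Proof.
have := lcp_size (A1 p) (A1 q); have := lcp_size (A2 p) (A2 q).
rewrite !size_A1 !size_A2 => s2 s1; have iN := ltn_ord i.
case/orP => hi.
  by have := nth_lcp hi; rewrite !nth_A1 ?memZ_val //; lia.
have hi' : N - i.+1 < lcp (A2 p) (A2 q) by lia.
have := nth_lcp hi'; rewrite !nth_A2; try lia.
by rewrite (_ : N - _.+1 = i) ?memZ_val //; lia.
Qed.

Lemma rho_le_dinf (p q : Gn N) : rho p q <= 2 + 2 * dinf (phi1 p) (phi1 q).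
Proof.
have xy := @lamps_eq_lcp p q.
have := lcp_size (A1 p) (A1 q); have := lcp_size (A2 p) (A2 q).
rewrite dinf_phi1 /tdist !size_A1 !size_A2.
case: p q xy => x k [y l] /=.
set c1 := lcp (A1 _) _; set c2 := lcp (A2 _) _ => xy s2 s1.
have kN := ltn_ord k; have lN := ltn_ord l.
have c1k : c1 <= k by lia.
have c1l : c1 <= l by lia.
have kc2 : k + c2 <= N by lia.
have lc2 : l + c2 <= N by lia.
have [w1 w2] := walk_routes c1k c1l kc2 lc2 xy.
have := gdist_le w1; have := gdist_le w2; rewrite /rho; lia.
Qed.

Lemma gstep_cursor (p q : Gn N) : gstep p q ->
  (p.2 < m /\ (q.2 : nat) = p.2.+1) \/ ((p.2 : nat) = m /\ (q.2 : nat) = 0).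
Proof.
case/andP => /eqP -> _ /=; case: (ltnP p.2 m) => pm; first by left; rewrite modn_small.
have -> : (p.2 : nat) = m by have := ltn_ord p.2; lia.
by right; rewrite modnn.
Qed.

Definition seam_dist (p : Gn N) := minn p.2 (m - p.2).

Lemma seam_dist_lipschitz (p q : Gn N) : gadj p q -> seam_dist p <= seam_dist q + 1.
Proof. by rewrite /seam_dist; case/orP => /gstep_cursor[] []; lia. Qed.

Lemma memZ_gstep (p q : Gn N) j :
  gstep p q -> j != (q.2 : nat) -> memZ q.1 j = memZ p.1 j.
Proof.
case/andP => _ /orP[/eqP->//|/eqP->] jq; apply: eq_existsb => i.
case: (val i =P j) => //= ij; rewrite /symdiff !inE.
have /negbTE-> : i != q.2 by apply: contra jq => /eqP <-; rewrite ij.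
by case: (i \in p.1).
Qed.

Lemma tdist_A_gstep (p q : Gn N) : gstep p q -> p.2 < m ->
  tdist (A1 p) (A1 q) <= 3 /\ tdist (A2 p) (A2 q) <= 3.
Proof.
move=> pq pm; have [[_ qp]|[pm' _]] := gstep_cursor pq; last by lia.
have := lcp_size (A1 p) (A1 q); have := lcp_size (A2 p) (A2 q).
rewrite /tdist !size_A1 !size_A2 qp => s2 s1; split.
  suff : p.2 <= lcp (A1 p) (A1 q) by lia.
  apply: lcp_ge; rewrite ?size_A1 ?qp // => j jp.
  by rewrite nth_A1 // nth_A1 ?qp ?(memZ_gstep pq) ?qp //; lia.
suff : m - p.2 - 1 <= lcp (A2 p) (A2 q) by lia.
apply: lcp_ge; rewrite ?size_A2 ?qp; try lia.
by move=> j hj; rewrite !nth_A2 ?qp ?(memZ_gstep pq) ?qp //; lia.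
Qed.

(* Off the seam every step moves A1 and A2 by at most 3 in the tree, and a
   walk using the seam edge passes through a vertex at seam distance 0. *)
Lemma walk_tdist_or_seam j (a c : Gn N) : walk (@gadj N) j a c ->
  (tdist (A1 a) (A1 c) <= 3 * j /\ tdist (A2 a) (A2 c) <= 3 * j)
  \/ seam_dist a + seam_dist c <= j.
Proof.
elim: j a => [|j IH] a /=; first by move/eqP->; left; rewrite !tdist_refl.
case/existsP => z /andP[az wz].
have za : gadj z a by rewrite gadj_sym.
have sz := walk_lipschitz (@seam_dist_lipschitz) (walk_sym gadj_sym wz).
have := seam_dist_lipschitz az; have := seam_dist_lipschitz za.
case: (IH _ wz) => [[d1 d2]|]; last by right; lia.
case: (seam_dist a =P 0) => [|sa]; first by right; lia.
case: (seam_dist z =P 0) => [|sz0]; first by right; lia.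
have [s1 s2] : tdist (A1 a) (A1 z) <= 3 /\ tdist (A2 a) (A2 z) <= 3.
  case/orP: az => st.
    by apply: tdist_A_gstep; move: sa; rewrite /seam_dist; lia.
  rewrite tdist_sym (tdist_sym (A2 a)); apply: tdist_A_gstep => //.
  by move: sz0; rewrite /seam_dist; lia.
left; have := tdist_triangle (A1 a) (A1 z) (A1 c).
have := tdist_triangle (A2 a) (A2 z) (A2 c); lia.
Qed.

Hypothesis dvd6N : 6 %| N.

Lemma N_eq6 : N = 6 * (N %/ 6).
Proof. by rewrite mulnC divnK. Qed.

Lemma phi1_Wn (p : Gn N) : P1n p -> Wn (phi1 p).
Proof.
rewrite /P1n /Wn /inP1 /tlen; have [-> ->] := tseq_phi1 p.
by rewrite size_A1 size_A2; have := ltn_ord p.2; have := N_eq6; lia.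
Qed.

Lemma phi1_surj (w : Tn N * Tn N) : Wn w -> exists2 p : Gn N, P1n p & phi1 p = w.
Proof.
case: w => W1 W2; rewrite /Wn /inP1 /= => hw.
have W1N : tlen W1 < N by have := N_eq6; lia.
pose x := [set i : 'I_N | if i < tlen W1 then nth false (tseq W1) i
                          else nth false (tseq W2) (N - i.+1)].
pose k : 'I_N := inZp (tlen W1).
have kE : k = tlen W1 :> nat by rewrite /k /= modn_small.
exists (x, k); first by rewrite /P1n /inP1 kE; lia.
have [A1E A2E] := tseq_phi1 (x, k).
rewrite [phi1 _]surjective_pairing; congr pair; apply: tseq_inj.
  rewrite A1E; apply: (@eq_from_nth _ false); rewrite size_A1 kE // => j hj.
  rewrite nth_A1 ?kE // memZ_inZp; last lia.
  by rewrite inE /= modn_small ?hj //; lia.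
rewrite A2E; apply: (@eq_from_nth _ false); rewrite size_A2 kE; last move=> j hj.
  by move: hw; rewrite /tlen; lia.
rewrite nth_A2 ?kE // memZ_inZp; last lia.
rewrite inE /= modn_small ?ifN; last lia; last by rewrite -leqNgt; lia.
by congr nth; lia.
Qed.

Lemma dinf_le_rho (p q : Gn N) : P1n p -> P1n q ->
  dinf (phi1 p) (phi1 q) <= 6 * rho p q + 12.
Proof.
rewrite dinf_phi1 /P1n /inP1 => hp hq; have := N_eq6.
have := ltn_ord p.2; have := ltn_ord q.2.
case: (walk_tdist_or_seam (walk_rho p q)) => [|]; first lia.
rewrite /seam_dist /tdist; have := lcp_size (A1 p) (A1 q).
have := lcp_size (A2 p) (A2 q); rewrite !size_A1 !size_A2; lia.
Qed.
End Lamplighter.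

Theorem mainTheorem3 (n : nat) (hn : 6 <= n) (h6 : 6 %| n) :
  [/\ (* phi_{1,n} : P_{1,n} -> W_n is a bijection *)
      (forall p : Gn n, P1n p -> Wn (phi1 p)),
      {in @P1n n &, injective (@phi1 n)},
      (forall w : Tn n * Tn n, Wn w -> exists2 p : Gn n, P1n p & phi1 p = w),
      (* the two distortion bounds *)
      (forall p q : Gn n, P1n p -> P1n q ->
         rho p q <= 2 + 2 * dinf (phi1 p) (phi1 q)
         /\ dinf (phi1 p) (phi1 q) <= 6 * rho p q + 12)
    & (* consequence: rho/4 <= d_inf o (phi x phi) <= 18 rho *)
      (forall p q : Gn n, P1n p -> P1n q ->
         rho p q <= 4 * dinf (phi1 p) (phi1 q)
         /\ dinf (phi1 p) (phi1 q) <= 18 * rho p q)].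
Proof.
case: n hn h6 => [//|m] _ h6.
have bounds (p q : Gn m.+1) : P1n p -> P1n q ->
    rho p q <= 2 + 2 * dinf (phi1 p) (phi1 q)
    /\ dinf (phi1 p) (phi1 q) <= 6 * rho p q + 12.
  by move=> hp hq; split; [exact: rho_le_dinf | exact: dinf_le_rho].
split => //.
- exact: phi1_Wn.
- by move=> p q _ _; apply: phi1_inj.
- exact: phi1_surj.
move=> p q hp hq; have := bounds p q hp hq.
have [<-|pq] := eqVneq p q.
  have /eqP-> : rho p p == 0 by rewrite rho_eq0.
  by have /eqP-> : dinf (phi1 p) (phi1 p) == 0 by rewrite dinf_phi1_eq0.
have : 0 < rho p q by rewrite lt0n rho_eq0.
have : 0 < dinf (phi1 p) (phi1 q) by rewrite lt0n dinf_phi1_eq0.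
lia.
Qed.
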